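(* The CrossEntropySurrogate $L_{CE}$ is not a realizable $(\mathcal M,\mathcal R)$-consistent surrogate for $L^{0-1}_{\mathrm{def}}$: there exist a data distribution, a human expert, and a class of scoring functions closed under scaling for which the induced class contains a pair $(m^*,r^* )$ with $L^{0-1}_{\mathrm{def}}(m^*,r^* )=0$, but the conclusion of realizable $(\mathcal M,\mathcal R)$-consistency fails for $L_{CE}$.
   Context: Labels $\mathcal Y=\{1,\dots,C\}$, human expert prediction $h\in\mathcal Y$. A scoring function $\mathbf g=(g_1,\dots,g_{|\mathcal Y|},g_\bot)$ induces $m(x)=\arg\max_{y\in\mathcal Y}g_y(x)$ and $r(x)=\mathbb{I}\{g_\bot(x)>\max_{y}g_y(x)\}$ ($r=1$ means defer). A class $\mathcal G$ is closed under scaling if $\mathbf g\in\mathcal G\Rightarrow\alpha\mathbf g\in\mathcal G$ for all $\alpha\in\mathbb R$. $L^{0-1}_{\mathrm{def}}(m,r)=\mathbb{P}[((1-r(X))m(X)+r(X)h(Z))\neq Y]$. The CrossEntropySurrogate is the expectation of the pointwise loss $L_{CE}(\mathbf g,x,y,h)=-\log\frac{\exp(g_y(x))}{\sum_{y'\in\mathcal Y\cup\{\bot\}}\exp(g_{y'}(x))}-\mathbb{I}_{h=y}\log\frac{\exp(g_\bot(x))}{\sum_{y'\in\mathcal Y\cup\{\bot\}}\exp(g_{y'}(x))}$. A surrogate $\tilde L$ is realizable $(\mathcal M,\mathcal R)$-consistent for $L^{0-1}_{\mathrm{def}}$ if, whenever some $(m^*,r^* )\in\mathcal M\times\mathcal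 R$ has $L^{0-1}_{\mathrm{def}}(m^*,r^* )=0$, every minimizer of $\tilde L$ over $\mathcal M\times\mathcal R$ has zero $L^{0-1}_{\mathrm{def}}$. *)

From mathcomp Require Import all_boot all_order all_algebra.
From mathcomp Require Import reals.
From mathcomp Require Import sequences exp.
Set Implicit Arguments. Unset Strict Implicit. Unset Printing Implicit Defensive.
Import Order.TTheory GRing.Theory Num.Theory.
Local Open Scope ring_scope.

Section Defer.
Variables (R : realType) (n : nat) (X Z : finType).
(* Labels Y = {1,...,C} with C = n.+1, encoded as 'I_n.+1 (label k+1 <-> k). *)
Notation lab := 'I_n.+1.

(* Scoring function g = (g_1,...,g_C, g_bot): label scores and the bot score. *)
Definition scorer := ((X -> lab -> R) * (X -> R))%type.

Definition scale (a : R) (g : scorer) : scorer :=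
  (fun x y => a * g.1 x y, fun x => a * g.2 x).

Definition closed_under_scaling (G : scorer -> Prop) : Prop :=
  forall (a : R) (g : scorer), G g -> G (scale a g).

Definition mof (g : scorer) (x : X) : lab := [arg max_(i > ord0) g.1 x i]%O.
Definition rof (g : scorer) (x : X) : bool := [forall y, g.1 x y < g.2 x].

Definition Mclass (G : scorer -> Prop) (m : X -> lab) : Prop :=
  exists g, G g /\ m = mof g.
Definition Rclass (G : scorer -> Prop) (r : X -> bool) : Prop :=
  exists g, G g /\ r = rof g.

Definition is_distr (P : {ffun X * Z * lab -> R}) : Prop :=
  (forall t, 0 <= P t) /\ \sum_t P t = 1.

Definition Ldef (P : {ffun X * Z * lab -> R}) (h : Z -> lab)
    (m : X -> lab) (r : X -> bool) : R :=
  \sum_t P t * ((if r t.1.1 then h t.1.2 else m t.1.1) != t.2)%:R.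

Definition LCE_pt (g : scorer) (x : X) (y hz : lab) : R :=
  let S := \sum_(y' : lab) expR (g.1 x y') + expR (g.2 x) in
  - ln (expR (g.1 x y) / S) - (hz == y)%:R * ln (expR (g.2 x) / S).

Definition LCE (P : {ffun X * Z * lab -> R}) (h : Z -> lab) (g : scorer) : R :=
  \sum_t P t * LCE_pt g t.1.1 t.2 (h t.1.2).

Definition realizable_consistent (Ls : scorer -> R)
    (P : {ffun X * Z * lab -> R}) (h : Z -> lab) (G : scorer -> Prop) : Prop :=
  (exists m r, Mclass G m /\ Rclass G r /\ Ldef P h m r = 0) ->
  forall g, G g -> (forall g', G g' -> Ls g <= Ls g') ->
    Ldef P h (mof g) (rof g) = 0.
End Defer.

(* Jensen's inequality for log-sum-exp puts the cross-entropy surrogate above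
   its tangent at the zero scorer.  Take two equally likely points and an
   expert who always answers the first label: on one point the true label is
   another one, so the classifier must predict it; on the other the expert is
   right, so the scorer must defer.  Some scorer [g] achieves this with zero
   deferral loss, and its weights can be tuned so that the derivative of the
   surrogate at zero in direction [g] vanishes.  Then the zero scorer, which
   lies on the ray of scalings of [g], minimises the surrogate over that ray,
   yet it never defers and predicts the same label on both points. *)
From mathcomp Require Import all_boot all_order all_algebra.
From mathcomp Require Import reals.
From mathcomp Require Import sequences exp.
From mathcomp Require Import boolp ring lra.
Import Order.TTheory GRing.Theory Num.Theory.
Local Open Scope ring_scope.

Lemma sum_expR_ge_mean (R : realType) (I : finType) (v : I -> R) (b : R) :
  (#|I|%:R + 1) * expR ((\sum_i v i + b) / (#|I|%:R + 1))
    <= \sum_i expR (v i) + expR b.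
Proof.
set N := #|I|%:R + 1; set m := _ / N.
have N_gt0 : 0 < N by rewrite ltr_wpDl.
have tangent u : expR m * (1 + (u - m)) <= expR u.
  rewrite -[u in X in _ <= X](subrK m) expRD [X in _ <= X]mulrC.
  by rewrite ler_pM2l ?expR_gt0 ?expR_ge1Dx.
have -> : N * expR m
    = \sum_i expR m * (1 + (v i - m)) + expR m * (1 + (b - m)).
  rewrite -big_distrr -mulrDr mulrC; congr (_ * _).
  rewrite !big_split /= sumrN !sumr_const -mulr_natr /m /N.
  change #|xpredT| with #|I|.
  by field; rewrite gt_eqF.
by apply: lerD => //; apply: ler_sum => i _.
Qed.

Lemma sumr_indicator (R : pzSemiRingType) (T : finType) (a : T) (F : T -> R) :
  \sum_t (t == a)%:R * F t = F a.
Proof.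
under eq_bigr do rewrite mulr_natl mulrb.
by rewrite -big_mkcond big_pred1_eq.
Qed.

Section ScoringFunctions.
Context {R : realType} {n : nat} {X : finType}.
Implicit Types (g : scorer R n X) (a : R) (x : X) (y hz : 'I_n.+1).

Definition scorer0 : scorer R n X := (fun _ _ => 0, fun _ => 0).

Lemma scaleM a b g : scale a (scale b g) = scale (a * b) g.
Proof.
by rewrite /scale; congr pair; apply/funext => x; [apply/funext => y|];
  rewrite /= mulrA.
Qed.

Lemma scale1 g : scale 1 g = g.
Proof.
by case: g => g1 g2; rewrite /scale; congr pair; apply/funext => x;
  [apply/funext => y|]; rewrite /= mul1r.
Qed.

Lemma scale0 g : scale 0 g = scorer0.
Proof.
by rewrite /scale; congr pair; apply/funext => x; [apply/funext => y|];
  rewrite /= mul0r.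
Qed.

Lemma rof0 x : rof scorer0 x = false.
Proof. by apply/negbTE/forallPn; exists ord0; rewrite ltxx. Qed.

Lemma sum_expR_scores_gt0 g x : 0 < \sum_y expR (g.1 x y) + expR (g.2 x).
Proof.
by rewrite ltr_wpDl ?expR_gt0 ?sumr_ge0 // => y _; rewrite ltW ?expR_gt0.
Qed.

Lemma LCE_ptE g x y hz :
  LCE_pt g x y hz
    = (1 + (hz == y)%:R) * ln (\sum_y' expR (g.1 x y') + expR (g.2 x))
      - g.1 x y - (hz == y)%:R * g.2 x.
Proof.
rewrite /LCE_pt /= !lnM ?posrE ?invr_gt0 ?expR_gt0 ?sum_expR_scores_gt0 //.
by rewrite !lnV ?posrE ?sum_expR_scores_gt0 // !expRK; ring.
Qed.

Lemma LCE_pt0 x y hz :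
  LCE_pt scorer0 x y hz = (1 + (hz == y)%:R) * ln (n%:R + 2).
Proof.
rewrite LCE_ptE /= expR0 sumr_const card_ord mulr0 !subr0.
by rewrite mulrSr -addrA.
Qed.

(* The derivative of [a |-> LCE_pt (scale a g) x y hz] at [a = 0]. *)
Definition LCE_pt_deriv0 g x y hz : R :=
  (1 + (hz == y)%:R) * ((\sum_y' g.1 x y' + g.2 x) / (n%:R + 2))
  - g.1 x y - (hz == y)%:R * g.2 x.

Lemma LCE_pt_deriv0Z a g x y hz :
  LCE_pt_deriv0 (scale a g) x y hz = a * LCE_pt_deriv0 g x y hz.
Proof. by rewrite /LCE_pt_deriv0 /= -mulr_sumr; ring. Qed.

Lemma LCE_pt_ge_tangent0 g x y hz :
  LCE_pt scorer0 x y hz + LCE_pt_deriv0 g x y hz <= LCE_pt g x y hz.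
Proof.
rewrite LCE_pt0 LCE_ptE /LCE_pt_deriv0 !addrA -mulrDr !lerD2r.
rewrite ler_wpM2l ?addr_ge0 ?ler0n //.
have -> : n%:R + 1 + 1 = #|'I_n.+1|%:R + 1 :> R by rewrite card_ord natr1.
set mu := _ / _; rewrite -[mu]expRK -lnM ?posrE ?expR_gt0 ?ltr_wpDl //.
by rewrite ler_ln ?posrE ?sum_expR_ge_mean ?sum_expR_scores_gt0
  ?mulr_gt0 ?expR_gt0 ?ltr_wpDl.
Qed.

End ScoringFunctions.

Section Surrogate.
Context {R : realType} {n : nat} {X Z : finType}.
Variables (P : {ffun X * Z * 'I_n.+1 -> R}) (h : Z -> 'I_n.+1).
Implicit Types (g : scorer R n X) (a : R).

Definition LCE_deriv0 g : R :=
  \sum_t P t * LCE_pt_deriv0 g t.1.1 t.2 (h t.1.2).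

Lemma LCE_deriv0Z a g : LCE_deriv0 (scale a g) = a * LCE_deriv0 g.
Proof.
by rewrite mulr_sumr; apply: eq_bigr => t _; rewrite LCE_pt_deriv0Z mulrCA.
Qed.

Hypothesis P_ge0 : forall t, 0 <= P t.

Lemma LCE_ge_tangent0 g : LCE P h scorer0 + LCE_deriv0 g <= LCE P h g.
Proof.
rewrite /LCE -big_split /=; apply: ler_sum => t _.
by rewrite -mulrDr ler_wpM2l ?LCE_pt_ge_tangent0.
Qed.

Lemma LCE_scorer0_le_scale g a :
  LCE_deriv0 g = 0 -> LCE P h scorer0 <= LCE P h (scale a g).
Proof.
move=> dg0; have := LCE_ge_tangent0 (scale a g).
by rewrite LCE_deriv0Z dg0 mulr0 addr0.
Qed.

End Surrogate.

Section Counterexample.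
Context {R : realType} {n : nat}.
Hypothesis n_gt0 : (0 < n)%N.

Definition label1 : 'I_n.+1 := Ordinal (n_gt0 : (1 < n.+1)%N).

Definition t_predict : bool * unit * 'I_n.+1 := (true, tt, label1).
Definition t_defer : bool * unit * 'I_n.+1 := (false, tt, ord0).

Definition cex_distr : {ffun bool * unit * 'I_n.+1 -> R} :=
  [ffun t => ((t == t_predict)%:R + (t == t_defer)%:R) / 2].

Definition cex_expert (z : unit) : 'I_n.+1 := ord0.

(* The weights are tuned so that [LCE_deriv0 cex_distr cex_expert cex_scorer]
   vanishes. *)
Definition cex_scorer : scorer R n bool :=
  (fun x y => if x then (y == label1)%:R * n%:R
              else - ((y == ord0)%:R * (n%:R + 2)),
   fun x => if x then 0 else 1).

Definition cex_class (g : scorer R n bool) : Prop :=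
  exists a, g = scale a cex_scorer.

Lemma cex_distr_sum (F : bool * unit * 'I_n.+1 -> R) :
  \sum_t cex_distr t * F t = (F t_predict + F t_defer) / 2.
Proof.
under eq_bigr do rewrite ffunE mulrAC mulrDl.
by rewrite -mulr_suml big_split /= !sumr_indicator.
Qed.

Lemma cex_distrP : is_distr cex_distr.
Proof.
split=> [t|]; first by rewrite ffunE divr_ge0 ?addr_ge0 ?ler0n.
by rewrite -(eq_bigr _ (fun t _ => mulr1 (cex_distr t))) cex_distr_sum; lra.
Qed.

Lemma cex_class_closed : closed_under_scaling cex_class.
Proof. by move=> a _ [b ->]; exists (a * b); rewrite scaleM. Qed.

Lemma Ldef_cex_scorer :
  Ldef cex_distr cex_expert (mof cex_scorer) (rof cex_scorer) = 0.
Proof.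
rewrite /Ldef cex_distr_sum /=.
have -> : mof cex_scorer true = label1.
  rewrite /mof; case: arg_maxP => // i _ i_max; apply/eqP/negPn/negP => i_neq.
  have := i_max label1 isT; rewrite /cex_scorer /= (negbTE i_neq).
  by rewrite mul0r mul1r leNgt ltr0n n_gt0.
have -> : rof cex_scorer true = false.
  by apply/negbTE/forallPn; exists label1; rewrite /cex_scorer /= mul1r -leNgt.
have -> : rof cex_scorer false = true.
  apply/forallP => y; rewrite /cex_scorer /= ltrNl.
  by apply: lt_le_trans (ltrN10 R) _; rewrite mulr_ge0 ?addr_ge0 ?ler0n.
by rewrite /cex_expert !eqxx addr0 mul0r.
Qed.

Lemma cex_realizable : exists m r, Mclass cex_class m /\ Rclass cex_class r /\
  Ldef cex_distr cex_expert m r = 0.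
Proof.
have cex_scorer_in : cex_class cex_scorer by exists 1; rewrite scale1.
exists (mof cex_scorer), (rof cex_scorer); split; first by exists cex_scorer.
by split; [exists cex_scorer | exact: Ldef_cex_scorer].
Qed.

Lemma LCE_deriv0_cex_scorer : LCE_deriv0 cex_distr cex_expert cex_scorer = 0.
Proof.
rewrite /LCE_deriv0 cex_distr_sum /LCE_pt_deriv0 /cex_scorer /cex_expert /=.
rewrite sumrN !sumr_indicator.
have : n%:R + 2 != 0 :> R by rewrite gt_eqF // ltr_wpDl.
by move=> ?; field.
Qed.

Lemma cex_class_scorer0 : cex_class scorer0.
Proof. by exists 0; rewrite scale0. Qed.

Lemma LCE_scorer0_min g : cex_class g ->
  LCE cex_distr cex_expert scorer0 <= LCE cex_distr cex_expert g.
Proof.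
move=> [a ->]; apply: LCE_scorer0_le_scale LCE_deriv0_cex_scorer => t.
by case: cex_distrP => P_ge0 _.
Qed.

Lemma Ldef_scorer0_gt0 :
  0 < Ldef cex_distr cex_expert (mof (@scorer0 R n bool))
                                (rof (@scorer0 R n bool)).
Proof.
rewrite /Ldef cex_distr_sum /= !rof0 divr_gt0 //.
have -> : mof (@scorer0 R n bool) false = mof (@scorer0 R n bool) true by [].
by case: eqVneq => [->|_] /=; rewrite ?add0r ?ltr_pwDl ?ler0n.
Qed.

End Counterexample.

Theorem theorem6 (R : realType) (n : nat) (hn : (0 < n)%N) :
  exists (X Z : finType) (P : {ffun X * Z * 'I_n.+1 -> R})
         (h : Z -> 'I_n.+1) (G : scorer R n X -> Prop),
    is_distr P /\ closed_under_scaling G /\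
    (exists m r, Mclass G m /\ Rclass G r /\ Ldef P h m r = 0) /\
    ~ realizable_consistent (LCE P h) P h G.
Proof.
exists bool, unit, (cex_distr hn), cex_expert, (cex_class hn).
split; [exact: cex_distrP|split; [exact: cex_class_closed|split]].
  exact: cex_realizable.
move=> /(_ (cex_realizable hn) _ (cex_class_scorer0 hn)).
move=> /(_ (@LCE_scorer0_min _ _ hn)).
by move/eqP; rewrite gt_eqF ?Ldef_scorer0_gt0.
Qed.
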